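(* Let $N,M$ be positive integers, let $\mathscr{A}\subset\mathscr{M}(N,M)$ and $\mathscr{B}\subset\mathscr{M}(M,N)$ be finite sets of real matrices, and let $\|\cdot\|$ be a submultiplicative norm on $\mathscr{M}(N,N)$. Suppose there is a periodic sequence $\{\bar B_n\}_{n\ge1}$ with $\bar B_n\in\mathscr{B}$ such that $\|A_n\bar B_n\cdots A_1\bar B_1\|\to0$ as $n\to\infty$ for every sequence $\{A_n\}_{n\ge1}$ with $A_n\in\mathscr{A}$. Then there exist constants $C>0$ and $\lambda\in(0,1)$ such that \[ \|A_n\bar B_n\cdots A_1\bar B_1\|\le C\lambda^n,\qquad n=1,2,\ldots, \] for every sequence $\{A_n\in\mathscr{A}\}$.
   Context: $\mathscr{M}(p,q)$ denotes the space of $p\times q$ real matrices with the topology of elementwise convergence. A norm on $\mathscr{M}(N,N)$ is submultiplicative if $\|XY\|\le\|X\|\,\|Y\|$ for all $X,Y$. *)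

From HB Require Import structures.
From mathcomp Require Import all_boot all_order all_algebra.
From mathcomp Require Import all_classical all_reals all_analysis.
From mathcomp Require Import Rstruct Rstruct_topology.
From Stdlib Require Import Rdefinitions.

Set Implicit Arguments.
Unset Strict Implicit.
Unset Printing Implicit Defensive.
Import Order.TTheory GRing.Theory Num.Theory.
Local Open Scope ring_scope.

Definition is_matrix_norm (N : nat) (nrm : 'M[R]_N -> R) : Prop :=
  [/\ forall X, 0 <= nrm X,
      forall X, nrm X = 0 -> X = 0,
      forall (a : R) X, nrm (a *: X) = `|a| * nrm X
    & forall X Y, nrm (X + Y) <= nrm X + nrm Y].

Definition submultiplicative (N : nat) (nrm : 'M[R]_N -> R) : Prop :=
  forall X Y : 'M[R]_N, nrm (X *m Y) <= nrm X * nrm Y.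

(* prodAB A B n = A_n B_n A_{n-1} B_{n-1} ... A_1 B_1 (sequences indexed from 1);
   prodAB A B 0 = identity. *)
Fixpoint prodAB (N M : nat) (A : nat -> 'M[R]_(N, M)) (B : nat -> 'M[R]_(M, N))
    (n : nat) : 'M[R]_N :=
  match n with
  | 0 => 1%:M
  | k.+1 => A k.+1 *m B k.+1 *m prodAB A B k
  end.

Definition periodic_seq (T : Type) (B : nat -> T) : Prop :=
  exists p : nat, (0 < p)%nat /\ forall n : nat, (1 <= n)%nat -> B (n + p)%nat = B n.

(* For every sequence (A_n) in As the product eventually has norm at most 1/2, in
   particular at some multiple of the period p of Bbar.  The choices range over the
   finite set As, so by König's lemma (the fan theorem) this happens before a time L
   that does not depend on the sequence.  Shifting a sequence by a multiple of p leaves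
   Bbar unchanged, so by submultiplicativity the norm is at least halved every L steps. *)
From HB Require Import structures.
From mathcomp Require Import all_boot all_order all_algebra.
From mathcomp Require Import all_classical all_reals all_analysis.
From mathcomp Require Import Rstruct Rstruct_topology.
From Stdlib Require Import Rdefinitions.
From mathcomp Require Import zify.
Import Order.TTheory GRing.Theory Num.Theory.
Local Open Scope classical_set_scope.
Local Open Scope ring_scope.
Set Implicit Arguments.
Unset Strict Implicit.

Definition values_in (T : eqType) (s : seq T) (A : nat -> T) : Prop :=
  forall n : nat, (0 < n)%nat -> A n \in s.

Section FanTheorem.
Variables (T : eqType) (s : seq T) (P : (nat -> T) -> nat -> Prop).
Hypothesis P_prefix : forall (A A' : nat -> T) (n : nat),
  (forall i, (0 < i <= n)%nat -> A i = A' i) -> P A n -> P A' n.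

Let avoids (L : nat) (A : nat -> T) := forall n, (n <= L)%nat -> ~ P A n.

(* The node [A 1, ..., A n] of the tree of choices has avoiding branches of every
   depth below it; König's argument walks down through such nodes. *)
Let extendable (n : nat) (A : nat -> T) := forall L, exists A',
  [/\ values_in s A', forall i, (0 < i <= n)%nat -> A' i = A i & avoids L A'].

Let extendable_step n A : extendable n A ->
  exists2 a, a \in s & extendable n.+1 [eta A with n.+1 |-> a].
Proof.
move=> extA; apply: contrapT => stuck.
have /choice [Lof LofP] : forall a, exists L, a \in s -> ~ exists A',
    [/\ values_in s A', forall i, (0 < i <= n.+1)%nat -> A' i = [eta A with n.+1 |-> a] i
      & avoids L A'].
  move=> a; have [a_s|] := boolP (a \in s); last by exists 0%nat.
  have /existsNP [L noA] : ~ extendable n.+1 [eta A with n.+1 |-> a].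
    by move=> ext; apply: stuck; exists a.
  by exists L.
have [A' [A'_in A'_pre A'_avoids]] := extA (\max_(a <- s) Lof a).
apply: (LofP _ (A'_in n.+1 isT)); exists A'; split=> // [i /andP[i_gt0 i_le]|m m_le].
  by rewrite /=; case: eqP => [->//|/eqP i_neq]; apply: A'_pre; rewrite i_gt0; lia.
by apply: (A'_avoids m); apply: leq_trans m_le (leq_bigmax_seq _ (A'_in n.+1 isT) _).
Qed.

Lemma fan_theorem : (forall A, values_in s A -> exists n, P A n) ->
  exists L, forall A, values_in s A -> exists2 n, (n <= L)%nat & P A n.
Proof.
move=> barred; apply: contrapT => /forallNP unbounded.
have avoiding L : exists A, values_in s A /\ avoids L A.
  apply: contrapT => /forallNP noA; apply: (unbounded L) => A A_in.
  by apply: contrapT => noP; apply: (noA A); split=> // n n_le PAn; apply: noP; exists n.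
have [A0 _] := avoiding 0%nat.
have ext0 : extendable 0 A0.
  by move=> L; have [A [A_in A_avoids]] := avoiding L; exists A; split=> // i; lia.
have /choice [g gP] : forall nA : nat * (nat -> T), exists a, extendable nA.1 nA.2 ->
    a \in s /\ extendable nA.1.+1 [eta nA.2 with nA.1.+1 |-> a].
  case=> n A; have [/extendable_step [a a_s ext]|not_ext] := pselect (extendable n A).
    by exists a.
  by exists (A0 0%nat) => /not_ext.
pose prefix n := iteri n (fun k A => [eta A with k.+1 |-> g (k, A)]) A0.
have prefix_ext n : extendable n (prefix n).
  by elim: n => // n IHn; apply: (gP (n, prefix n) IHn).2.
pose A i := prefix i i.
have prefix_stable n i : (0 < i <= n)%nat -> prefix n i = A i.
  elim: n => [|n IHn] /andP[i_gt0 i_le]; first lia.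
  rewrite /=; case: eqP => [->|/eqP i_neq]; first by rewrite /A /= eqxx.
  by apply: IHn; rewrite i_gt0; lia.
have A_in : values_in s A.
  by case=> // i _; rewrite /A /= eqxx; apply: (gP (i, prefix i) (prefix_ext i)).1.
have [n PAn] := barred A A_in.
have [A' [_ A'_pre A'_avoids]] := prefix_ext n n.
apply: (A'_avoids n (leqnn n)); apply: P_prefix PAn => i i_n.
by rewrite A'_pre // prefix_stable.
Qed.

End FanTheorem.

Lemma periodic_addn_dvdn (T : Type) (B : nat -> T) (p : nat) :
  (forall n, (0 < n)%nat -> B (n + p)%nat = B n) ->
  forall m n, (p %| m)%nat -> (0 < n)%nat -> B (n + m)%nat = B n.
Proof.
move=> Bp m n /dvdnP[k ->]; elim: k n => [|k IHk] n n_gt0; first by rewrite addn0.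
by rewrite mulSn addnA addnAC Bp ?IHk // addn_gt0 n_gt0.
Qed.

Section ProdAB.
Variables (N M : nat).
Implicit Types (A : nat -> 'M[R]_(N, M)) (B : nat -> 'M[R]_(M, N)).

Lemma eq_prodAB A A' B B' n :
  (forall i, (0 < i <= n)%nat -> A i = A' i) -> (forall i, (0 < i <= n)%nat -> B i = B' i) ->
  prodAB A B n = prodAB A' B' n.
Proof.
elim: n => //= n IHn eqA eqB; rewrite eqA ?eqB ?leqnn // IHn // => i /andP[i_gt0 i_le].
  by apply: eqA; rewrite i_gt0 ltnW.
by apply: eqB; rewrite i_gt0 ltnW.
Qed.

Lemma prodAB_addn A B m n :
  prodAB A B (n + m) = prodAB (fun i => A (i + m)%nat) (fun i => B (i + m)%nat) n *m prodAB A B m.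
Proof. by elim: n => [|n IHn] /=; rewrite ?mul1mx // IHn !mulmxA. Qed.

Variable nrm : 'M[R]_N -> R.
Hypothesis nrm_ge0 : forall X, 0 <= nrm X.
Hypothesis nrm_mul : submultiplicative nrm.

Lemma norm_prodAB_le_expn A B (K : R) n :
  (forall i, (0 < i)%nat -> nrm (A i *m B i) <= K) -> nrm (prodAB A B n) <= nrm 1%:M * K ^+ n.
Proof.
move=> AB_le; elim: n => [|n IHn] /=; first by rewrite expr0 mulr1.
apply: le_trans (nrm_mul _ _) _.
by rewrite exprS mulrCA ler_pM ?AB_le.
Qed.

Variables (As : seq 'M[R]_(N, M)) (Bbar : nat -> 'M[R]_(M, N)) (p : nat) (K q : R).
Hypothesis Bbar_periodic : forall n, (0 < n)%nat -> Bbar (n + p)%nat = Bbar n.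
Hypothesis K_ge1 : 1 <= K.
Hypothesis ABbar_le : forall a i, a \in As -> (0 < i)%nat -> nrm (a *m Bbar i) <= K.
Hypothesis q_ge0 : 0 <= q.
Hypothesis q_le1 : q <= 1.

Lemma norm_prodAB_le_geometric L :
  (forall A, values_in As A -> exists2 m, (m <= L)%nat &
     [/\ (0 < m)%nat, (p %| m)%nat & nrm (prodAB A Bbar m) <= q]) ->
  forall A n, values_in As A -> nrm (prodAB A Bbar n) <= nrm 1%:M * K ^+ L * q ^+ (n %/ L).
Proof.
move=> contracts A n; elim/ltn_ind: n A => n IHn A A_in.
have [m m_le [m_gt0 p_m Am_le]] := contracts A A_in.
have D_ge0 : 0 <= nrm 1%:M * K ^+ L by rewrite mulr_ge0 // exprn_ge0 // (le_trans ler01).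
have [n_lt_m | m_le_n] := ltnP n m.
  rewrite divn_small ?(leq_trans n_lt_m) // expr0 mulr1.
  apply: le_trans (norm_prodAB_le_expn (K := K) n _) _ => [i i_gt0|].
    exact: ABbar_le (A_in i i_gt0) i_gt0.
  by rewrite ler_wpM2l // ler_weXn2l // ltnW // (leq_trans n_lt_m).
pose A' i := A (i + m)%nat.
have A'_in : values_in As A' by move=> i i_gt0; apply: A_in; rewrite addn_gt0 i_gt0.
have -> : prodAB A Bbar n = prodAB A' Bbar (n - m) *m prodAB A Bbar m.
  rewrite -[in LHS](subnK m_le_n) prodAB_addn; congr (_ *m _).
  by apply: eq_prodAB => // i /andP[i_gt0 _]; apply: (periodic_addn_dvdn Bbar_periodic).
have IHnm := IHn (n - m)%nat ltac:(lia) A' A'_in.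
apply: le_trans (nrm_mul _ _) _; apply: le_trans (ler_pM (nrm_ge0 _) (nrm_ge0 _) IHnm Am_le) _.
rewrite -[leLHS]mulrA ler_wpM2l // -exprSr ler_wiXn2l //.
apply: leq_trans (leq_div2r L (_ : n <= n - m + L)%nat) _; first lia.
by rewrite divnDr ?dvdnn // divnn (leq_trans m_gt0 m_le) addn1.
Qed.

End ProdAB.

Lemma uniform_contraction_time (N M : nat) (As : seq 'M[R]_(N, M))
    (Bbar : nat -> 'M[R]_(M, N)) (nrm : 'M[R]_N -> R) (p : nat) (e : R) :
  (0 < p)%nat -> 0 < e ->
  (forall A, values_in As A -> (fun n => nrm (prodAB A Bbar n)) @ \oo --> (0 : R)) ->
  exists L, forall A, values_in As A -> exists2 m, (m <= L)%nat &
    [/\ (0 < m)%nat, (p %| m)%nat & nrm (prodAB A Bbar m) <= e].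
Proof.
move=> p_gt0 e_gt0 cvg0; apply: fan_theorem => [A A' m eqAA' [m_gt0 p_m Am_le]|A A_in].
  by split=> //; rewrite -(eq_prodAB eqAA' (fun _ _ => erefl)).
have [k _ small] := cvgr0_norm_lt (V := R^o) _ (cvg0 A A_in) _ e_gt0.
have k_le : (k <= k.+1 * p)%nat by rewrite (leq_trans (leqnSn k)) // leq_pmulr.
exists (k.+1 * p)%nat; split; rewrite ?muln_gt0 ?dvdn_mull //.
exact: ltW (le_lt_trans (ler_norm _) (small _ k_le)).
Qed.

Lemma exists_ge1_bound (I J : eqType) (s : seq I) (t : seq J) (f : I -> J -> R) :
  exists2 K, 1 <= K & forall a b, a \in s -> b \in t -> f a b <= K.
Proof.
exists (\big[Num.max/1]_(a <- s) \big[Num.max/1]_(b <- t) f a b); first exact: bigmax_ge_id.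
move=> a b a_s b_t; apply: le_trans (le_bigmax_seq 1 b xpredT (f a) b_t isT) _.
exact: (le_bigmax_seq 1 a xpredT (fun a => \big[Num.max/1]_(b <- t) f a b) a_s isT).
Qed.

Lemma expr_divn_le_powR (q : R) (L n : nat) : 0 < q <= 1 -> (0 < L)%nat ->
  q ^+ (n %/ L) <= q^-1 * (q `^ L%:R^-1) ^+ n.
Proof.
move=> /andP[q_gt0 q_le1] L_gt0; set lam := q `^ L%:R^-1.
have lam_ge0 : 0 <= lam := powR_ge0 _ _.
have lam_le1 : lam <= 1.
  by rewrite -(powRr0 q); apply: ger_powR; rewrite ?q_gt0 ?invr_ge0.
have lamL : lam ^+ L = q.
  by rewrite -powR_mulrn // -powRrM mulVf ?pnatr_eq0 -?lt0n // powRr1 ?ltW.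
rewrite -[leLHS](mulKf (lt0r_neq0 q_gt0)) -exprS ler_pM2l ?invr_gt0 //.
by rewrite -lamL -exprM ler_wiXn2l // mulnC ltnW // ltn_ceil.
Qed.

Theorem theorem2 (N M : nat) (As : seq 'M[R]_(N, M)) (Bs : seq 'M[R]_(M, N))
    (nrm : 'M[R]_N -> R) (Bbar : nat -> 'M[R]_(M, N)) :
  (0 < N)%nat -> (0 < M)%nat ->
  is_matrix_norm nrm -> submultiplicative nrm ->
  (forall n : nat, (1 <= n)%nat -> Bbar n \in Bs) ->
  periodic_seq Bbar ->
  (forall A : nat -> 'M[R]_(N, M), (forall n : nat, (1 <= n)%nat -> A n \in As) ->
     (fun n : nat => nrm (prodAB A Bbar n)) @ \oo --> (0 : R)) ->
  exists (C lam : R), 0 < C /\ 0 < lam < 1 /\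
    forall A : nat -> 'M[R]_(N, M), (forall n : nat, (1 <= n)%nat -> A n \in As) ->
      forall n : nat, (1 <= n)%nat -> nrm (prodAB A Bbar n) <= C * lam ^+ n.
Proof.
move=> N_gt0 _ [nrm_ge0 nrm_eq0 _ _] nrm_mul Bbar_in [p [p_gt0 Bbar_per]] cvg0.
have half_gt0 : 0 < 2^-1 :> R by rewrite invr_gt0.
have half_lt1 : 2^-1 < 1 :> R by rewrite invf_lt1 ?ltr1n.
have [L contracts] := uniform_contraction_time p_gt0 half_gt0 cvg0.
have [K K_ge1 AB_le] := exists_ge1_bound As Bs (fun a b => nrm (a *m b)).
have decay := norm_prodAB_le_geometric nrm_ge0 nrm_mul Bbar_per K_ge1
  (fun a i a_in i_gt0 => AB_le _ _ a_in (Bbar_in i i_gt0)) (ltW half_gt0) (ltW half_lt1) (L := L.+1).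
have nrm1_gt0 : 0 < nrm 1%:M.
  rewrite lt_def nrm_ge0 andbT; apply/eqP => /nrm_eq0/matrixP/(_ (Ordinal N_gt0) (Ordinal N_gt0)).
  by rewrite !mxE eqxx => /eqP; rewrite oner_eq0.
set D := nrm 1%:M * K ^+ L.+1.
have D_gt0 : 0 < D by rewrite mulr_gt0 // exprn_gt0 // (lt_le_trans ltr01).
exists (D * 2), (2^-1 `^ L.+1%:R^-1); split; first by rewrite mulr_gt0.
split.
  rewrite powR_gt0 //=; apply: (@lt_le_trans _ _ (1 `^ L.+1%:R^-1)); last by rewrite powR1.
  by rewrite gt0_ltr_powR ?invr_gt0 ?nnegrE ?ltW.
move=> A A_in n _; apply: le_trans (decay _ A n A_in) _ => [B B_in|].
  by have [m m_le Pm] := contracts B B_in; exists m => //; apply: leqW.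
rewrite -/D -mulrA ler_pM2l // -[X in X * _]invrK.
by apply: expr_divn_le_powR; rewrite ?half_gt0 ?ltW.
Qed.
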